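(* Let $\{(\mathbf{X}^t,Y^t)\}_{t\in\mathbb{N}}$ be a discrete-time stochastic process with $\mathbf{X}^t\in\mathbb{R}^d$, and let $h^t(\mathbf{x})=\langle \boldsymbol{\beta}^t,\mathbf{x}\rangle$ be a sequence of linear classifiers approximating $P(Y^t\mid\mathbf{X}^t)$, each trained on a dataset $\mathcal{D}^t\sim P(\mathbf{X}^t,Y^t)$. Assume $-k\le \beta^t_i\le k$ and $-k\le X^t_i\le k$ for all $i,t$, for some $k\in\mathbb{R}^+$. Given a realization $\mathbf{x}^t$ and an intervention $\boldsymbol{\theta}$ with $\mathbb{E}[h^t(\hat{\mathbf{x}}^t)]\ge 1/2$, the temporal invalidation rate satisfies, for every $\tau>0$, $$\Delta h(\boldsymbol{\theta};\tau)\le k\sqrt{d}\cdot\left(\mathbb{E}\left[\|\boldsymbol{\beta}^{t+\tau}-\boldsymbol{\beta}^t\|\right]+\mathbb{E}\left[\|\hat{\mathbf{x}}^{t+\tau}-\hat{\mathbf{x}}^t\|\right]\right),$$ where $\|\cdot\|$ is the $\ell_2$-norm and the expectation is over $\mathcal{D}^t\sim P(\mathbf{X}^t,Y^t)$ and the training process.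
   Context: The intervention is a soft intervention $do(\boldsymbol{\theta})=do(\mathbf{X}_{\mathcal{I}}=\mathbf{x}_{\mathcal{I}}+\boldsymbol{\theta})$ on a subset $\mathcal{I}$ of features; $nd(\mathcal{I})$ denotes the non-descendants of the intervened variables. $\hat{\mathbf{x}}^t\sim P^{do(\boldsymbol{\theta})}(\mathbf{X}^t\mid \mathbf{X}^t_{nd(\mathcal{I})}=\mathbf{x}^t_{nd(\mathcal{I})})$ and $\hat{\mathbf{x}}^{t+\tau}\sim P^{do(\boldsymbol{\theta})}(\mathbf{X}^{t+\tau}\mid \mathbf{X}^{t+\tau}_{nd(\mathcal{I})}=\mathbf{x}^{t+\tau}_{nd(\mathcal{I})})$ (interventional distributions). The temporal invalidation rate after lag $\tau>0$ is $\Delta h(\boldsymbol{\theta};\tau)=\mathbb{E}\left[\left|h^{t+\tau}(\hat{\mathbf{x}}^{t+\tau})-h^t(\hat{\mathbf{x}}^t)\right|\right]$. *)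

From HB Require Import structures.
From mathcomp Require Import all_boot all_order all_algebra.
From mathcomp Require Import all_classical all_reals all_analysis.
Set Implicit Arguments. Unset Strict Implicit. Unset Printing Implicit Defensive.
Import Order.TTheory GRing.Theory Num.Theory.
Local Open Scope ring_scope.

Definition dotp {R : realType} {d : nat} (u v : 'I_d -> R) : R :=
  \sum_(i < d) u i * v i.

Definition l2norm {R : realType} {d : nat} (u : 'I_d -> R) : R :=
  Num.sqrt (\sum_(i < d) u i ^+ 2).

Definition linclf {R : realType} {d : nat} (beta : 'I_d -> R) (x : 'I_d -> R) : R :=
  dotp beta x.

(* The bound holds pointwise, before taking expectations.  Writing
   <b', x'> - <b, x> = <b' - b, x'> + <b, x' - x> and using |x'_i|, |b_i| <= k,
   each term is at most k times an l1 norm, and ||u||_1 <= sqrt d ||u||_2 by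
   Cauchy-Schwarz.  Integrating this inequality gives the theorem. *)
From HB Require Import structures.
From mathcomp Require Import all_boot all_order all_algebra.
From mathcomp Require Import all_classical all_reals all_analysis.
From mathcomp Require Import ring lra.
Import Order.TTheory GRing.Theory Num.Theory.
Local Open Scope ring_scope.

Lemma sqr_sum_le_card_sum_sqr (R : realDomainType) (I : finType) (a : I -> R) :
  (\sum_i a i) ^+ 2 <= #|I|%:R * \sum_i a i ^+ 2.
Proof.
set S := \sum_i a i; set Q := \sum_i a i ^+ 2.
have sum_diff_sqr_ge0 : 0 <= \sum_i \sum_j (a i - a j) ^+ 2.
  by apply: sumr_ge0 => i _; apply: sumr_ge0 => j _; apply: sqr_ge0.
have expand : \sum_i \sum_j (a i - a j) ^+ 2 =
    \sum_i \sum_j (a i ^+ 2 + a j ^+ 2) - 2 * \sum_i \sum_j a i * a j.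
  rewrite mulr_sumr -sumrB; apply: eq_bigr => i _.
  by rewrite mulr_sumr -sumrB; apply: eq_bigr => j _; ring.
have sum_sqr : \sum_i \sum_j (a i ^+ 2 + a j ^+ 2) = #|I|%:R * Q + #|I|%:R * Q.
  under eq_bigr => i _ do rewrite big_split /= sumr_const.
  by rewrite big_split /= sumrMnl sumr_const -/Q mulr_natl.
have sum_prod : \sum_i \sum_j a i * a j = S ^+ 2.
  by rewrite expr2 /S mulr_suml; apply: eq_bigr => i _; rewrite mulr_sumr.
rewrite expand sum_sqr sum_prod in sum_diff_sqr_ge0; lra.
Qed.

Lemma sum_norm_le_sqrt_dim_l2norm (R : realType) (d : nat) (u : 'I_d -> R) :
  \sum_(i < d) `|u i| <= Num.sqrt d%:R * l2norm u.
Proof.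
rewrite /l2norm -sqrtrM ?ler0n //.
have l1_ge0 : 0 <= \sum_(i < d) `|u i| by apply: sumr_ge0.
rewrite -[leLHS](ger0_norm l1_ge0) -sqrtr_sqr; apply: ler_wsqrtr.
have sum_sqr_normE : \sum_(i < d) `|u i| ^+ 2 = \sum_(i < d) u i ^+ 2.
  by apply: eq_bigr => i _; rewrite real_normK ?num_real.
by rewrite -sum_sqr_normE -[X in X%:R]card_ord sqr_sum_le_card_sum_sqr.
Qed.

Lemma linclf_subE (R : realType) (d : nat) (b b' x x' : 'I_d -> R) :
  linclf b' x' - linclf b x =
  \sum_(i < d) ((b' i - b i) * x' i + b i * (x' i - x i)).
Proof. by rewrite /linclf /dotp -sumrB; apply: eq_bigr => i _; ring. Qed.

Lemma norm_linclf_sub_le (R : realType) (d : nat) (k : R) (b b' x x' : 'I_d -> R) :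
  0 <= k -> (forall i, `|b i| <= k) -> (forall i, `|x' i| <= k) ->
  `|linclf b' x' - linclf b x| <=
  k * Num.sqrt d%:R * (l2norm (fun i => b' i - b i) + l2norm (fun i => x' i - x i)).
Proof.
move=> k_ge0 b_le x'_le; rewrite linclf_subE.
apply: le_trans (ler_norm_sum _ _ _) _.
apply: (@le_trans _ _ (k * (\sum_(i < d) `|b' i - b i| + \sum_(i < d) `|x' i - x i|))).
  rewrite mulrDr !mulr_sumr -big_split /=; apply: ler_sum => i _.
  apply: le_trans (ler_normD _ _) _; rewrite !normrM mulrC.
  by apply: lerD; apply: ler_wpM2r.
rewrite -mulrA; apply: ler_wpM2l => //; rewrite mulrDr.
by apply: lerD; apply: sum_norm_le_sqrt_dim_l2norm.
Qed.

Section Measurability.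
Context d0 (T : measurableType d0) (R : realType) (d : nat).

Lemma measurable_linclf (b x : T -> 'I_d -> R) :
  (forall i, measurable_fun setT (fun w => b w i)) ->
  (forall i, measurable_fun setT (fun w => x w i)) ->
  measurable_fun setT (fun w => linclf (b w) (x w)).
Proof.
move=> mb mx; apply: measurable_sum => i.
exact: measurable_realfun.measurable_funM.
Qed.

Lemma measurable_l2norm (u : T -> 'I_d -> R) :
  (forall i, measurable_fun setT (fun w => u w i)) ->
  measurable_fun setT (fun w => l2norm (u w)).
Proof.
move=> mu; apply: measurableT_comp.
  exact: measurable_realfun.continuous_measurable_fun (@sqrt_continuous R).
by apply: measurable_sum => i; apply: measurable_realfun.measurable_funX.
Qed.

Lemma measurable_l2norm_sub (u v : T -> 'I_d -> R) :
  (forall i, measurable_fun setT (fun w => u w i)) ->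
  (forall i, measurable_fun setT (fun w => v w i)) ->
  measurable_fun setT (fun w => l2norm (fun i => u w i - v w i)).
Proof.
move=> mu mv; apply: (@measurable_l2norm (fun w i => u w i - v w i)) => i.
exact: measurable_realfun.measurable_funB.
Qed.

End Measurability.

Local Open Scope ereal_scope.

Lemma integral_norm_le_scale_add d0 (T : measurableType d0) (R : realType)
    (mu : {measure set T -> \bar R}) (c : R) (f g h : T -> R) :
  (0 <= c)%R -> measurable_fun setT f ->
  measurable_fun setT g -> measurable_fun setT h ->
  (forall w, 0 <= g w)%R -> (forall w, 0 <= h w)%R ->
  (forall w, `|f w| <= c * (g w + h w))%R ->
  \int[mu]_w `|f w|%:E <= c%:E * (\int[mu]_w (g w)%:E + \int[mu]_w (h w)%:E).
Proof.
move=> c_ge0 mf mg mh g_ge0 h_ge0 f_le.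
have mgE := (measurable_realfun.measurable_EFinP _ _).2 mg.
have mhE := (measurable_realfun.measurable_EFinP _ _).2 mh.
rewrite -ge0_integralD //; [|by move=> w _; rewrite lee_fin..].
rewrite -ge0_integralZl_EFin //; last 2 first.
- by move=> w _; rewrite adde_ge0 // lee_fin.
- exact: emeasurable_funD.
apply: ge0_le_integral => //.
- apply/measurable_realfun.measurable_EFinP.
  by apply: measurableT_comp; first exact: measurable_realfun.normr_measurable.
- exact/measurable_funeM/emeasurable_funD.
- by move=> w _; rewrite -EFinD -EFinM lee_fin.
Qed.

Theorem theorem1 (R : realType) (dsp : measure_display) (Omega : measurableType dsp)
  (P : probability Omega R) (d : nat) (k : R)
  (beta : nat -> Omega -> 'I_d -> R)   (* beta^t, random via dataset D^t and training *)
  (xhat : nat -> Omega -> 'I_d -> R)   (* interventional samples \hat x^t *)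
  (t tau : nat)
  (hk : (0 < k)%R)
  (hbeta_meas : forall s i, measurable_fun setT (fun w => beta s w i))
  (hxhat_meas : forall s i, measurable_fun setT (fun w => xhat s w i))
  (hbeta_bd : forall s w i, (- k <= beta s w i <= k)%R)
  (hxhat_bd : forall s w i, (- k <= xhat s w i <= k)%R)
  (hvalid : \int[P]_w (linclf (beta t w) (xhat t w))%:E >= (1 / 2)%:E)
  (htau : (0 < tau)%N) :
  \int[P]_w `| linclf (beta (t + tau)%N w) (xhat (t + tau)%N w)
               - linclf (beta t w) (xhat t w) |%:E
  <= (k * Num.sqrt (d%:R))%:E *
     (\int[P]_w (l2norm (fun i => beta (t + tau)%N w i - beta t w i))%:E
      + \int[P]_w (l2norm (fun i => xhat (t + tau)%N w i - xhat t w i))%:E).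
Proof.
have k_ge0 : (0 <= k)%R := ltW hk.
apply: integral_norm_le_scale_add.
- by rewrite mulr_ge0 ?sqrtr_ge0.
- by apply: measurable_realfun.measurable_funB; apply: measurable_linclf.
- exact: measurable_l2norm_sub.
- exact: measurable_l2norm_sub.
- by move=> w; apply: sqrtr_ge0.
- by move=> w; apply: sqrtr_ge0.
- by move=> w; apply: norm_linclf_sub_le => // i; rewrite ler_norml.
Qed.
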